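(* Let $f:\mathbb{R}_+\to\mathbb{R}$ be a real-valued function with $f\in GM$. If the improper integral $\int_0^\infty f(t)\,dt$ converges, then $t f(t)\to 0$ as $t\to\infty$.
   Context: $\mathbb{R}_+=[0,\infty)$. All functions $f:\mathbb{R}_+\to\mathbb{C}$ considered are locally integrable, locally of bounded variation on $(0,\infty)$, and satisfy $f(t)\to 0$ as $t\to\infty$. Integrals over infinite intervals (and integrals $\int_0^\infty$) are understood as improper Riemann (Riemann–Stieltjes) integrals. Such an $f$ is called general monotone, written $f\in GM$, if there exist constants $C>1$ and $\lambda>1$ such that for every $x>0$, $$\int_x^{2x}|df(t)|\le C\int_{x/\lambda}^{\lambda x}\frac{|f(t)|}{t}\,dt,$$ where $|df|$ denotes the total variation measure of $f$. *)

From Stdlib Require Import Reals Lra List Sorting.Sorted.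
From Coquelicot Require Import Coquelicot.
Open Scope R_scope.

Fixpoint var_sum (f : R -> R) (x : R) (l : list R) : R :=
  match l with
  | nil => 0
  | y :: l' => Rabs (f y - f x) + var_sum f y l'
  end.

Definition is_partition (a b : R) (l : list R) : Prop :=
  Sorted Rle (a :: l) /\ last (a :: l) a = b.

(* Total variation of f on [a,b], i.e. int_a^b |df|, as an extended real. *)
Definition total_variation (f : R -> R) (a b : R) : Rbar :=
  Lub_Rbar (fun s => exists l, is_partition a b l /\ s = var_sum f a l).

Definition bounded_variation (f : R -> R) (a b : R) : Prop :=
  exists M, forall l, is_partition a b l -> var_sum f a l <= M.

(* Standing assumptions on f : R_+ -> R (values on t < 0 are irrelevant). *)
Definition standing_assumptions (f : R -> R) : Prop :=
  (* locally integrable on R_+ = [0,oo): integrable on every [0,b]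
     (improper Riemann integral of |f| at 0+) *)
  (forall b, 0 < b -> exists l, is_RInt_gen (fun t => Rabs (f t)) (at_right 0) (at_point b) l)
  /\ (forall a b, 0 < a -> a <= b -> bounded_variation f a b)
  /\ filterlim f (Rbar_locally p_infty) (locally 0).

Definition GM (f : R -> R) : Prop :=
  standing_assumptions f /\
  exists C lam : R, 1 < C /\ 1 < lam /\
    forall x, 0 < x ->
      Rbar_le (total_variation f x (2 * x))
              (Finite (C * RInt (fun t => Rabs (f t) / t) (x / lam) (lam * x))).

From Pilot Require Import Defs.
From Stdlib Require Import Reals Lra Lia Classical List Sorting.Sorted.
From Coquelicot Require Import Coquelicot.
Open Scope R_scope.

(* Let m(y) = int_y^2y |f|.  Where f changes sign |f| is bounded by the
   variation, so cutting [y, 2y] into N pieces and using the Cauchy criterion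
   for int f gives m(y) <= N eta + (y/N) int_y^2y |df|.  The GM condition
   bounds y int_y^2y |df| by C lam times the mass of |f| on the 2k dyadic blocks
   of [y/2^k, 2^k y], where 2^k >= lam.  Hence, for N large, whenever m(y) is
   not small some nearby block carries 2^(k+1) m(y); iterating, m(y)/y keeps
   doubling, impossible since m(y) <= y eventually (f -> 0).  So m(y) -> 0, and
   t |f t| <= |int_t^2t f| + t int_t^2t |df| -> 0 by the same GM bound. *)

Lemma pow2_unbounded X : exists n, X < 2 ^ n.
Proof.
destruct (is_lim_seq_geom_p 2 ltac:(lra) (fun y => X < y) (ex_intro _ X (fun _ H => H)))
  as [N HN].
exists N. apply HN. lia.
Qed.

Lemma Rdiv_le_mul y lam : 0 < y -> 1 <= lam -> y / lam <= lam * y.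
Proof.
intros Hy Hlam.
apply Rle_trans with y.
- apply Rmult_le_reg_r with lam; [lra|].
  replace (y / lam * lam) with y by (field; lra). nra.
- rewrite <- (Rmult_1_l y) at 1. apply Rmult_le_compat_r; lra.
Qed.

Ltac sorted := repeat (apply Sorted_cons || apply HdRel_cons || apply HdRel_nil
                       || apply Sorted_nil); try lra.

Lemma last_cons_default {A} (y : A) l d d' : last (y :: l) d = last (y :: l) d'.
Proof.
revert y; induction l as [|z l IH]; intros y; [reflexivity|].
change (last (z :: l) d = last (z :: l) d'). apply IH.
Qed.

Lemma last_cons_app {A} (a : A) l1 l2 :
  last (a :: l1 ++ l2) a = last (last (a :: l1) a :: l2) (last (a :: l1) a).
Proof.
revert a; induction l1 as [|y l1 IH]; intros a; [reflexivity|].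
rewrite <- app_comm_cons.
change (last (y :: l1 ++ l2) a = last (last (y :: l1) a :: l2) (last (y :: l1) a)).
rewrite (last_cons_default y l1 a y), (last_cons_default y (l1 ++ l2) a y). apply IH.
Qed.

Lemma Sorted_cons_app a l1 l2 :
  Sorted Rle (a :: l1) -> Sorted Rle (last (a :: l1) a :: l2) -> Sorted Rle (a :: l1 ++ l2).
Proof.
revert a; induction l1 as [|y l1 IH]; intros a H1 H2; [exact H2|].
rewrite <- app_comm_cons.
change (Sorted Rle (last (y :: l1) a :: l2)) in H2.
apply Sorted_inv in H1 as [H1 H1'].
constructor.
- apply IH; [exact H1|]. rewrite (last_cons_default y l1 y a). exact H2.
- inversion H1'; subst. constructor. assumption.
Qed.

Lemma is_partition_app a b c l1 l2 :
  is_partition a b l1 -> is_partition b c l2 -> is_partition a c (l1 ++ l2).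
Proof.
intros [S1 L1] [S2 L2]. split.
- apply Sorted_cons_app; [exact S1|]. rewrite L1. exact S2.
- rewrite last_cons_app, L1. exact L2.
Qed.

Lemma var_sum_app f a l1 l2 :
  var_sum f a (l1 ++ l2) = var_sum f a l1 + var_sum f (last (a :: l1) a) l2.
Proof.
revert a; induction l1 as [|y l1 IH]; intros a; [simpl; lra|].
change (Rabs (f y - f a) + var_sum f y (l1 ++ l2)
  = Rabs (f y - f a) + var_sum f y l1 + var_sum f (last (y :: l1) a) l2).
rewrite IH, (last_cons_default y l1 y a). lra.
Qed.

Lemma var_sum_ge0 f x l : 0 <= var_sum f x l.
Proof.
revert x; induction l as [|y l IH]; intros x; simpl; [lra|].
pose proof (Rabs_pos (f y - f x)). pose proof (IH y). lra.
Qed.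

Definition variation (f : R -> R) (a b : R) : R := real (total_variation f a b).

Section Variation.
Variables (f : R -> R) (a b : R).
Hypotheses (Hab : a <= b) (HBV : Defs.bounded_variation f a b).

Let Vset := fun s => exists l, is_partition a b l /\ s = var_sum f a l.

Lemma total_variation_finite : total_variation f a b = Finite (variation f a b).
Proof.
destruct HBV as [M HM]. unfold variation, total_variation. fold Vset.
destruct (Lub_Rbar_correct Vset) as [Hub Hlub].
assert (Hup : Rbar_le (Lub_Rbar Vset) (Finite M)).
{ apply Hlub. intros s [l [Hl ->]]. exact (HM l Hl). }
assert (Hlo : Rbar_le (Finite (var_sum f a (b :: nil))) (Lub_Rbar Vset)).
{ apply Hub. exists (b :: nil). split; [split; [sorted | reflexivity] | reflexivity]. }
destruct (Lub_Rbar Vset); simpl in *; tauto.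
Qed.

Lemma var_sum_le_variation l : is_partition a b l -> var_sum f a l <= variation f a b.
Proof.
intros Hl. destruct (Lub_Rbar_correct Vset) as [Hub _].
pose proof total_variation_finite as HT.
unfold total_variation in HT. fold Vset in HT. rewrite HT in Hub.
apply (Hub (var_sum f a l)). now exists l.
Qed.

Lemma variation_le M : (forall l, is_partition a b l -> var_sum f a l <= M) ->
  variation f a b <= M.
Proof.
intros HM. destruct (Lub_Rbar_correct Vset) as [_ Hlub].
pose proof total_variation_finite as HT.
unfold total_variation in HT. fold Vset in HT. rewrite HT in Hlub.
apply (Hlub (Finite M)). intros s [l [Hl ->]]. exact (HM l Hl).
Qed.

Lemma variation_ge0 : 0 <= variation f a b.
Proof.
eapply Rle_trans; [apply (var_sum_ge0 f a (b :: nil))|].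
apply var_sum_le_variation. split; [sorted | reflexivity].
Qed.

Lemma Rabs_sub_le_variation s t : a <= s <= t -> t <= b ->
  Rabs (f t - f s) <= variation f a b.
Proof.
intros Hs Ht.
eapply Rle_trans; [|apply (var_sum_le_variation (s :: t :: b :: nil))].
- simpl. pose proof (Rabs_pos (f s - f a)). pose proof (Rabs_pos (f b - f t)). lra.
- split; [sorted | reflexivity].
Qed.

Lemma Rabs_sub_le_variation_sym s t : a <= s <= b -> a <= t <= b ->
  Rabs (f t - f s) <= variation f a b.
Proof.
intros Hs Ht. destruct (Rle_dec s t).
- apply Rabs_sub_le_variation; lra.
- rewrite Rabs_minus_sym. apply Rabs_sub_le_variation; lra.
Qed.

End Variation.

Lemma variation_add_le f a b c : a <= b -> b <= c ->
  Defs.bounded_variation f a b -> Defs.bounded_variation f b c ->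
  Defs.bounded_variation f a c ->
  variation f a b + variation f b c <= variation f a c.
Proof.
intros Hab Hbc HBab HBbc HBac.
cut (variation f a b <= variation f a c - variation f b c); [lra|].
apply variation_le; [exact Hab | exact HBab|]. intros l1 Hl1.
cut (variation f b c <= variation f a c - var_sum f a l1); [lra|].
apply variation_le; [exact Hbc | exact HBbc|]. intros l2 Hl2.
pose proof (var_sum_le_variation f a c ltac:(lra) HBac _ (is_partition_app _ _ _ _ _ Hl1 Hl2))
  as Hsum.
rewrite var_sum_app in Hsum. destruct Hl1 as [_ Hlast]. rewrite Hlast in Hsum. lra.
Qed.

(* Junk value: Coquelicot's [RInt] of a non-integrable function is
   [real p_infty = 0]. *)
Lemma RInt_not_ex (g : R -> R) a b : ~ ex_RInt g a b -> RInt g a b = 0.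
Proof.
intros H. unfold RInt, iota, lim. simpl. unfold R_complete_lim.
match goal with |- real (Lub_Rbar ?E) = 0 => assert (Lub_Rbar E = p_infty) as HE end.
{ apply is_lub_Rbar_unique. split.
  - intros x _. exact I.
  - intros [l| |] Hl; simpl; auto.
    + assert (l + 1 <= l); [|lra].
      apply (Hl (l + 1)). intros y Hy. exfalso. apply H. now exists y.
    + apply (Hl 0). intros y Hy. exfalso. apply H. now exists y. }
now rewrite HE.
Qed.

Lemma ex_RInt_Rabs f a b : ex_RInt f a b -> ex_RInt (fun t => Rabs (f t)) a b.
Proof. intros H. apply ex_RInt_Reals_1, RiemannInt_P16, ex_RInt_Reals_0, H. Qed.

Lemma RInt_Rabs_ge0 f a b : a <= b -> ex_RInt f a b ->
  0 <= RInt (fun t => Rabs (f t)) a b.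
Proof.
intros Hab H. apply RInt_ge_0; [exact Hab | now apply ex_RInt_Rabs | intros; apply Rabs_pos].
Qed.

Section OneInterval.
Variables (f : R -> R) (a b : R).
Hypotheses (Hab : a <= b) (Hint : ex_RInt f a b) (HBV : Defs.bounded_variation f a b).

(* Unless f has constant sign on [a, b], it takes values of both signs there,
   so |f t| is bounded by the oscillation of f. *)
Lemma RInt_Rabs_le_variation :
  RInt (fun t => Rabs (f t)) a b <= Rabs (RInt f a b) + (b - a) * variation f a b.
Proof.
assert (HV : 0 <= (b - a) * variation f a b)
  by (apply Rmult_le_pos; [lra | now apply variation_ge0]).
destruct (classic (forall t, a <= t <= b -> 0 <= f t)) as [Hpos|Hpos].
{ rewrite (RInt_ext _ f); [pose proof (Rle_abs (RInt f a b)); lra|].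
  intros x Hx. rewrite Rmin_left, Rmax_right in Hx by lra. apply Rabs_pos_eq, Hpos; lra. }
destruct (classic (forall t, a <= t <= b -> f t <= 0)) as [Hneg|Hneg].
{ rewrite (RInt_ext _ (fun x => - f x)).
  - replace (RInt (fun x => - f x) a b) with (- RInt f a b)
      by (symmetry; apply is_RInt_unique;
          exact (is_RInt_opp f a b _ (RInt_correct f a b Hint))).
    pose proof (Rle_abs (- RInt f a b)) as Hle. rewrite Rabs_Ropp in Hle. lra.
  - intros x Hx. rewrite Rmin_left, Rmax_right in Hx by lra. apply Rabs_left1, Hneg; lra. }
apply not_all_ex_not in Hpos as [q Hq]. apply imply_to_and in Hq as [Hq Hfq].
apply not_all_ex_not in Hneg as [p Hp]. apply imply_to_and in Hp as [Hp Hfp].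
assert (Hbound : forall t, a <= t <= b -> Rabs (Rabs (f t)) <= variation f a b).
{ intros t Ht. rewrite Rabs_Rabsolu.
  pose proof (Rabs_sub_le_variation_sym f a b Hab HBV p t Hp Ht).
  pose proof (Rabs_sub_le_variation_sym f a b Hab HBV q t Hq Ht).
  destruct (Rle_dec 0 (f t)).
  - rewrite Rabs_pos_eq in * by lra. lra.
  - rewrite Rabs_left in * by lra. lra. }
pose proof (abs_RInt_le_const _ a b _ Hab (ex_RInt_Rabs f a b Hint) Hbound).
pose proof (Rle_abs (RInt (fun t => Rabs (f t)) a b)). pose proof (Rabs_pos (RInt f a b)).
lra.
Qed.

Lemma Rabs_left_value_le :
  (b - a) * Rabs (f a) <= Rabs (RInt f a b) + (b - a) * variation f a b.
Proof.
assert (E : RInt (fun s => f a - f s) a b = (b - a) * f a - RInt f a b).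
{ apply is_RInt_unique.
  exact (is_RInt_minus (fun _ => f a) f a b _ _ (is_RInt_const a b (f a))
           (RInt_correct f a b Hint)). }
assert (Hosc : forall s, a <= s <= b -> Rabs (f a - f s) <= variation f a b).
{ intros s Hs. rewrite Rabs_minus_sym. apply (Rabs_sub_le_variation f a b Hab HBV); lra. }
pose proof (abs_RInt_le_const (fun s => f a - f s) a b _ Hab
  (ex_RInt_minus (fun _ => f a) f a b (ex_RInt_const a b (f a)) Hint) Hosc) as H.
rewrite E in H.
replace ((b - a) * Rabs (f a)) with (Rabs (((b - a) * f a - RInt f a b) + RInt f a b))
  by (rewrite Rplus_comm, Rplus_minus, Rabs_mult, Rabs_pos_eq; lra).
pose proof (Rabs_triang ((b - a) * f a - RInt f a b) (RInt f a b)). lra.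
Qed.

End OneInterval.

Definition RInt_cauchy_at_infty (f : R -> R) : Prop :=
  forall eta, 0 < eta -> exists A, 0 < A /\
    forall u v, A <= u -> A <= v -> Rabs (RInt f u v) <= eta.

Lemma is_RInt_gen_near (f : R -> R) (L : R) :
  is_RInt_gen f (at_right 0) (Rbar_locally p_infty) L ->
  forall e : posreal, exists d M, 0 < d /\
    forall u v, 0 < u < d -> M < v -> exists y, is_RInt f u v y /\ Rabs (y - L) < e.
Proof.
intros HL e. destruct (HL _ (locally_ball L e)) as [Q1 Q2 [d Hd] [M HM] HP].
exists d, M. split; [apply cond_pos|]. intros u v Hu Hv. apply (HP u v).
- apply Hd; [|lra]. change (Rabs (u - 0) < d). rewrite Rminus_0_r, Rabs_pos_eq; lra.
- apply HM. exact Hv.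
Qed.

Lemma ex_RInt_of_is_RInt_gen (f : R -> R) (L : R) :
  is_RInt_gen f (at_right 0) (Rbar_locally p_infty) L ->
  forall a b, 0 < a -> a <= b -> ex_RInt f a b.
Proof.
intros HL a b Ha Hab.
destruct (is_RInt_gen_near f L HL (mkposreal 1 Rlt_0_1)) as [d [M [Hd HP]]].
destruct (HP (Rmin a (d / 2)) (Rmax b (M + 1))) as [y [Hy _]].
- split; [apply Rmin_glb_lt; lra | pose proof (Rmin_r a (d / 2)); lra].
- pose proof (Rmax_r b (M + 1)); lra.
- apply (ex_RInt_Chasles_2 (V := R_CompleteNormedModule)) with (Rmin a (d / 2)).
  { split; [apply Rmin_l | exact Hab]. }
  apply (ex_RInt_Chasles_1 (V := R_CompleteNormedModule)) with (Rmax b (M + 1)).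
  + split; [pose proof (Rmin_l a (d / 2)); lra | apply Rmax_l].
  + now exists y.
Qed.

Lemma is_RInt_gen_cauchy (f : R -> R) (L : R) :
  is_RInt_gen f (at_right 0) (Rbar_locally p_infty) L ->
  RInt_cauchy_at_infty f.
Proof.
intros HL eta Heta.
destruct (is_RInt_gen_near f L HL (mkposreal (eta / 2) ltac:(lra))) as [d [M [Hd HP]]].
exists (Rmax (M + 1) 1). split; [pose proof (Rmax_r (M + 1) 1); lra|].
intros u v Hu Hv. pose proof (Rmax_l (M + 1) 1).
destruct (HP (d / 2) u ltac:(lra) ltac:(lra)) as [yu [Hyu Hbu]].
destruct (HP (d / 2) v ltac:(lra) ltac:(lra)) as [yv [Hyv Hbv]].
simpl in Hbu, Hbv.
assert (Eu : ex_RInt f (d / 2) u) by now exists yu.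
assert (Ev : ex_RInt f (d / 2) v) by now exists yv.
assert (Euv : ex_RInt f u v)
  by (apply ex_RInt_Chasles with (d / 2); [apply ex_RInt_swap|]; assumption).
pose proof (RInt_Chasles f (d / 2) u v Eu Euv) as HC.
change (RInt f (d / 2) u + RInt f u v = RInt f (d / 2) v) in HC.
rewrite (is_RInt_unique f _ _ _ Hyu), (is_RInt_unique f _ _ _ Hyv) in HC.
replace (RInt f u v) with ((yv - L) - (yu - L)) by lra.
eapply Rle_trans; [apply Rabs_triang|]. rewrite Rabs_Ropp. lra.
Qed.

Lemma no_unbounded_doubling (S : R -> Prop) (q : R -> R) (y0 : R) :
  S y0 -> 0 < q y0 -> (forall y, S y -> q y <= 1) ->
  ~ (forall y, S y -> exists y', S y' /\ 2 * q y <= q y').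
Proof.
intros Hy0 Hq0 Hq1 Hstep.
assert (Hiter : forall n, exists y, S y /\ 2 ^ n * q y0 <= q y).
{ induction n as [|n [y [Hy Hn]]].
  - exists y0. simpl. split; [exact Hy0 | lra].
  - destruct (Hstep y Hy) as [y' [Hy' H']]. exists y'. simpl. split; [exact Hy'|]. lra. }
destruct (pow2_unbounded (/ q y0)) as [n Hn].
destruct (Hiter n) as [y [Hy Hn']].
pose proof (Hq1 y Hy).
assert (1 < 2 ^ n * q y0); [|lra].
apply Rmult_lt_compat_r with (r := q y0) in Hn; [|exact Hq0].
rewrite Rinv_l in Hn; lra.
Qed.

(* A jump from y to y' multiplies both the ratio m y / y and the product y * m y
   by at least 2; the growing product keeps the orbit above r * A, while the
   ratio cannot exceed 1 there. *)
Lemma eventually_le_of_jumps (m : R -> R) (A E r : R) :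
  0 < A -> 0 < E -> 1 <= r ->
  (forall y, A <= y -> m y <= y) ->
  (forall y, r * A <= y -> E < m y ->
     exists y', y / r <= y' <= r * y /\ 2 * r * m y <= m y') ->
  exists Y, forall y, Y <= y -> m y <= E.
Proof.
intros HA HE Hr Hm Hjump.
apply NNPP. intros Hno.
set (B := r * A).
assert (HB : 0 < B) by (unfold B; nra).
assert (HBB : 0 <= B * B) by nra.
destruct (not_all_ex_not _ _ (fun H => Hno (ex_intro _ (Rmax B (B * B / E)) H)))
  as [y0 Hy0].
apply imply_to_and in Hy0 as [Hy0 Hmy0]. apply Rnot_le_lt in Hmy0.
pose proof (Rmax_l B (B * B / E)). pose proof (Rmax_r B (B * B / E)).
apply (no_unbounded_doubling (fun y => B <= y /\ E < m y /\ B * B <= y * m y)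
         (fun y => m y / y) y0).
- split; [lra | split; [exact Hmy0|]].
  assert (B * B = B * B / E * E) by (field; lra). nra.
- apply Rdiv_lt_0_compat; lra.
- intros y [Hy _].
  apply Rmult_le_reg_r with y; [lra|].
  unfold Rdiv. rewrite Rmult_assoc, Rinv_l, Rmult_1_r, Rmult_1_l by lra.
  apply Hm. unfold B in Hy. nra.
- intros y [Hy [HEy Hprod]].
  destruct (Hjump y Hy HEy) as [y' [[Hy'1 Hy'2] Hmy']].
  assert (Hypos : 0 < y) by lra.
  assert (HAy' : A <= y').
  { apply Rle_trans with (y / r); [|exact Hy'1].
    apply Rmult_le_reg_l with r; [lra|].
    replace (r * (y / r)) with y by (field; lra). exact Hy. }
  assert (Hmy'le : m y' <= y') by (apply Hm; exact HAy').
  assert (Hprod' : 2 * (y * m y) <= y' * m y').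
  { replace (2 * (y * m y)) with (y / r * (2 * r * m y)) by (field; lra).
    apply Rmult_le_compat; [apply Rdiv_le_0_compat | nra | |]; lra. }
  assert (Hy'pos : 0 < y')
    by (apply Rlt_le_trans with (y / r); [apply Rdiv_lt_0_compat|]; lra).
  assert (Hsq : B * B <= y' * y').
  { assert (y' * m y' <= y' * y') by (apply Rmult_le_compat_l; lra). lra. }
  exists y'. split; [split; [|split]|].
  + destruct (Rle_lt_dec B y'); [assumption | nra].
  + nra.
  + lra.
  + apply Rmult_le_reg_r with (y * y'); [nra|].
    unfold Rdiv.
    replace (2 * (m y * / y) * (y * y')) with (2 * m y * y') by (field; lra).
    replace (m y' * / y' * (y * y')) with (m y' * y) by (field; lra).
    nra.
Qed.

Definition dyadic_mass (f : R -> R) (y : R) : R := RInt (fun t => Rabs (f t)) y (2 * y).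

Section LocallyIntegrableBV.
Variable f : R -> R.
Hypothesis Hex : forall a b, 0 < a -> a <= b -> ex_RInt f a b.
Hypothesis HBV : forall a b, 0 < a -> a <= b -> Defs.bounded_variation f a b.

Lemma RInt_Rabs_Chasles a b c : 0 < a -> a <= b -> b <= c ->
  RInt (fun t => Rabs (f t)) a c
  = RInt (fun t => Rabs (f t)) a b + RInt (fun t => Rabs (f t)) b c.
Proof.
intros. symmetry. apply (RInt_Chasles (fun t => Rabs (f t))); apply ex_RInt_Rabs, Hex; lra.
Qed.

Lemma RInt_Rabs_subinterval a b c d : 0 < a -> a <= c -> c <= d -> d <= b ->
  RInt (fun t => Rabs (f t)) c d <= RInt (fun t => Rabs (f t)) a b.
Proof.
intros Ha Hac Hcd Hdb.
rewrite (RInt_Rabs_Chasles a c b), (RInt_Rabs_Chasles c d b) by lra.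
pose proof (RInt_Rabs_ge0 f a c Hac (Hex a c Ha Hac)).
pose proof (RInt_Rabs_ge0 f d b Hdb (Hex d b ltac:(lra) Hdb)).
lra.
Qed.

(* On each piece of length h combine [RInt_Rabs_le_variation] with the Cauchy
   bound; the variations of the pieces add up to at most the total one. *)
Lemma RInt_Rabs_le_pieces (A eta h : R) :
  0 < A -> 0 < h ->
  (forall u v, A <= u -> A <= v -> Rabs (RInt f u v) <= eta) ->
  forall n a, A <= a ->
  RInt (fun t => Rabs (f t)) a (a + INR n * h)
  <= INR n * eta + h * variation f a (a + INR n * h).
Proof.
intros HA Hh Hcau n. induction n as [|n IH]; intros a Ha.
- simpl. rewrite Rmult_0_l, Rplus_0_r, RInt_point.
  pose proof (variation_ge0 f a a (Rle_refl a) (HBV a a ltac:(lra) (Rle_refl a))).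
  change (0 <= 0 * eta + h * variation f a a). nra.
- rewrite S_INR.
  set (b := a + INR n * h).
  assert (Hn : 0 <= INR n) by apply pos_INR.
  assert (Hab : a <= b) by (unfold b; nra).
  replace (a + (INR n + 1) * h) with (b + h) by (unfold b; ring).
  rewrite (RInt_Rabs_Chasles a b (b + h)) by lra.
  pose proof (IH a Ha) as Hleft. fold b in Hleft.
  pose proof (RInt_Rabs_le_variation f b (b + h) ltac:(lra)
                (Hex b (b + h) ltac:(lra) ltac:(lra)) (HBV b (b + h) ltac:(lra) ltac:(lra)))
    as Hright.
  replace (b + h - b) with h in Hright by ring.
  pose proof (Hcau b (b + h) ltac:(lra) ltac:(lra)).
  pose proof (variation_add_le f a b (b + h) Hab ltac:(lra)
    (HBV a b ltac:(lra) Hab) (HBV b (b + h) ltac:(lra) ltac:(lra))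
    (HBV a (b + h) ltac:(lra) ltac:(lra))).
  assert (h * (variation f a b + variation f b (b + h)) <= h * variation f a (b + h))
    by (apply Rmult_le_compat_l; lra).
  lra.
Qed.

Lemma RInt_Rabs_le_dyadic_blocks z : 0 < z -> forall n c,
  (forall j, (j < n)%nat -> dyadic_mass f (2 ^ j * z) <= c) ->
  RInt (fun t => Rabs (f t)) z (2 ^ n * z) <= INR n * c.
Proof.
intros Hz n. induction n as [|n IH]; intros c Hc.
- simpl. rewrite Rmult_1_l, RInt_point. change (0 <= 0 * c). lra.
- assert (Hp1 : 1 <= 2 ^ n) by (apply pow_R1_Rle; lra).
  replace (2 ^ S n * z) with (2 * (2 ^ n * z)) by (simpl; ring).
  rewrite (RInt_Rabs_Chasles z (2 ^ n * z) (2 * (2 ^ n * z))) by nra.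
  rewrite S_INR.
  pose proof (IH c (fun j Hj => Hc j ltac:(lia))). pose proof (Hc n ltac:(lia)).
  unfold dyadic_mass in *. lra.
Qed.

Lemma dyadic_mass_le_cauchy (N : nat) (A eta y : R) :
  0 < A -> (forall u v, A <= u -> A <= v -> Rabs (RInt f u v) <= eta) ->
  (0 < N)%nat -> A <= y ->
  dyadic_mass f y <= INR N * eta + y * variation f y (2 * y) / INR N.
Proof.
intros HA Hcau HN Hy.
assert (HN' : 0 < INR N) by (apply lt_0_INR; exact HN).
pose proof (RInt_Rabs_le_pieces A eta (y / INR N) HA ltac:(apply Rdiv_lt_0_compat; lra)
              Hcau N y Hy) as H.
replace (y + INR N * (y / INR N)) with (2 * y) in H by (field; lra).
unfold dyadic_mass. replace (y * variation f y (2 * y) / INR N)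
  with (y / INR N * variation f y (2 * y)) by (field; lra).
exact H.
Qed.

Lemma dyadic_mass_le_id : filterlim f (Rbar_locally p_infty) (locally 0) ->
  exists A, 0 < A /\ forall y, A <= y -> dyadic_mass f y <= y.
Proof.
intros Hlim.
destruct (Hlim _ (locally_ball 0 (mkposreal 1 Rlt_0_1))) as [M HM].
exists (Rmax M 0 + 1). split; [pose proof (Rmax_r M 0); lra|].
intros y Hy. pose proof (Rmax_l M 0). pose proof (Rmax_r M 0).
assert (Hbound : forall t, y <= t <= 2 * y -> Rabs (Rabs (f t)) <= 1).
{ intros t Ht. rewrite Rabs_Rabsolu.
  pose proof (HM t ltac:(lra)) as Hft. change (Rabs (f t - 0) < 1) in Hft.
  rewrite Rminus_0_r in Hft. lra. }
pose proof (abs_RInt_le_const _ y (2 * y) 1 ltac:(lra)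
              (ex_RInt_Rabs f _ _ (Hex y (2 * y) ltac:(lra) ltac:(lra))) Hbound).
unfold dyadic_mass. pose proof (Rle_abs (RInt (fun t => Rabs (f t)) y (2 * y))). lra.
Qed.

Section GeneralMonotone.
Variables C lam : R.
Hypotheses (HC : 0 < C) (Hlam : 1 < lam).
Hypothesis HGM : forall x, 0 < x ->
  Rbar_le (total_variation f x (2 * x))
          (Finite (C * RInt (fun t => Rabs (f t) / t) (x / lam) (lam * x))).

(* On [y / lam, lam * y] one has 1 / t <= lam / y.  If |f t| / t is not
   integrable there, Coquelicot's RInt returns 0 and the bound is trivial. *)
Lemma variation_le_GM y : 0 < y ->
  y * variation f y (2 * y) <= C * lam * RInt (fun t => Rabs (f t)) (y / lam) (lam * y).
Proof.
intros Hy.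
assert (Hyl : 0 < y / lam) by (apply Rdiv_lt_0_compat; lra).
assert (Hle : y / lam <= lam * y) by (apply Rdiv_le_mul; lra).
pose proof (HGM y Hy) as H.
rewrite (total_variation_finite f y (2 * y) ltac:(lra) (HBV y (2 * y) Hy ltac:(lra))) in H.
change (variation f y (2 * y) <= C * RInt (fun t => Rabs (f t) / t) (y / lam) (lam * y)) in H.
assert (Habs := ex_RInt_Rabs f _ _ (Hex _ _ Hyl Hle)).
pose proof (RInt_Rabs_ge0 f _ _ Hle (Hex _ _ Hyl Hle)) as H0.
assert (Hw : RInt (fun t => Rabs (f t) / t) (y / lam) (lam * y)
             <= lam / y * RInt (fun t => Rabs (f t)) (y / lam) (lam * y)).
{ destruct (classic (ex_RInt (fun t => Rabs (f t) / t) (y / lam) (lam * y))) as [Hi|Hi].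
  - assert (Hscal : RInt (fun t => lam / y * Rabs (f t)) (y / lam) (lam * y)
                    = lam / y * RInt (fun t => Rabs (f t)) (y / lam) (lam * y))
      by exact (RInt_scal (fun t => Rabs (f t)) _ _ (lam / y) Habs).
    rewrite <- Hscal.
    apply RInt_le; [exact Hle | exact Hi | exact (ex_RInt_scal _ _ _ (lam / y) Habs) |].
    intros t Ht.
    assert (Hinv : / t <= lam / y).
    { replace (lam / y) with (/ (y / lam)) by (field; lra). apply Rinv_le_contravar; lra. }
    unfold Rdiv at 1. rewrite Rmult_comm.
    apply Rmult_le_compat_r; [apply Rabs_pos | exact Hinv].
  - rewrite RInt_not_ex by exact Hi.
    apply Rmult_le_pos; [apply Rlt_le, Rdiv_lt_0_compat; lra | exact H0]. }
apply Rmult_le_compat_l with (r := y) in H; [|lra].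
apply Rmult_le_compat_l with (r := C) in Hw; [|lra].
replace (C * lam * RInt (fun t => Rabs (f t)) (y / lam) (lam * y))
  with (y * (C * (lam / y * RInt (fun t => Rabs (f t)) (y / lam) (lam * y))))
  by (field; lra).
apply Rle_trans with (1 := H). apply Rmult_le_compat_l; lra.
Qed.

Variable k : nat.
Hypothesis Hk : lam <= 2 ^ k.

(* [y / 2^k, 2^k y] is the union of the 2k dyadic blocks [2^j z, 2^(j+1) z],
   z = y / 2^k. *)
Lemma variation_le_dyadic_blocks y c : 0 < y ->
  (forall j, (j < 2 * k)%nat -> dyadic_mass f (2 ^ j * (y / 2 ^ k)) <= c) ->
  y * variation f y (2 * y) <= C * lam * (INR (2 * k) * c).
Proof.
intros Hy Hc.
assert (Hr : 0 < 2 ^ k) by (apply pow_lt; lra).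
assert (Hz : 0 < y / 2 ^ k) by (apply Rdiv_lt_0_compat; lra).
pose proof (RInt_Rabs_le_dyadic_blocks _ Hz _ _ Hc) as Hblocks.
replace (2 ^ (2 * k) * (y / 2 ^ k)) with (2 ^ k * y) in Hblocks
  by (replace (2 * k)%nat with (k + k)%nat by lia; rewrite pow_add; field; lra).
assert (Hwin : RInt (fun t => Rabs (f t)) (y / lam) (lam * y)
               <= RInt (fun t => Rabs (f t)) (y / 2 ^ k) (2 ^ k * y)).
{ apply RInt_Rabs_subinterval; [exact Hz | | | apply Rmult_le_compat_r; lra].
  - unfold Rdiv. apply Rmult_le_compat_l; [lra|]. apply Rinv_le_contravar; lra.
  - apply Rdiv_le_mul; lra. }
pose proof (variation_le_GM y Hy).
assert (0 < C * lam) by nra.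
apply Rle_trans with (C * lam * RInt (fun t => Rabs (f t)) (y / lam) (lam * y)); [lra|].
apply Rmult_le_compat_l; lra.
Qed.

Lemma Rabs_mul_le_dyadic_blocks t c : 0 < t ->
  (forall j, (j < 2 * k)%nat -> dyadic_mass f (2 ^ j * (t / 2 ^ k)) <= c) ->
  t * Rabs (f t) <= Rabs (RInt f t (2 * t)) + C * lam * (INR (2 * k) * c).
Proof.
intros Ht Hc.
pose proof (Rabs_left_value_le f t (2 * t) ltac:(lra) (Hex t (2 * t) Ht ltac:(lra))
              (HBV t (2 * t) Ht ltac:(lra))) as H.
replace (2 * t - t) with t in H by ring.
pose proof (variation_le_dyadic_blocks t c Ht Hc). lra.
Qed.

(* If no block near y carries 2^(k+1) times the mass of [y, 2y], the GM bound
   and [dyadic_mass_le_cauchy] give m(y) <= N eta + m(y) / 2. *)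
Lemma dyadic_mass_jump (N : nat) (A eta : R) :
  0 < A -> (forall u v, A <= u -> A <= v -> Rabs (RInt f u v) <= eta) ->
  4 * C * lam * INR (2 * k) * 2 ^ k < INR N ->
  forall y, 2 ^ k * A <= y -> 2 * (INR N * eta) < dyadic_mass f y ->
  exists y', y / 2 ^ k <= y' <= 2 ^ k * y /\
             2 * 2 ^ k * dyadic_mass f y <= dyadic_mass f y'.
Proof.
intros HA Hcau HN y Hy Hmy.
assert (Hr : 1 <= 2 ^ k) by (apply pow_R1_Rle; lra).
assert (Hy0 : 0 < y) by nra.
assert (Hz : 0 < y / 2 ^ k) by (apply Rdiv_lt_0_compat; lra).
assert (HK : 0 <= INR (2 * k)) by apply pos_INR.
assert (HCl : 0 < C * lam) by nra.
assert (HN0 : 0 < INR N) by (assert (0 <= C * lam * INR (2 * k)) by nra; nra).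
destruct (classic (exists j, (j < 2 * k)%nat /\
           2 * 2 ^ k * dyadic_mass f y <= dyadic_mass f (2 ^ j * (y / 2 ^ k))))
  as [[j [Hj Hjump]] | Hnone].
- exists (2 ^ j * (y / 2 ^ k)). split; [|exact Hjump].
  assert (1 <= 2 ^ j) by (apply pow_R1_Rle; lra).
  assert (2 ^ j <= 2 ^ (k + k)) by (apply Rle_pow; [lra | lia]).
  rewrite pow_add in *. split; [nra|].
  replace (2 ^ k * y) with (2 ^ k * 2 ^ k * (y / 2 ^ k)) by (field; lra).
  apply Rmult_le_compat_r; lra.
- exfalso.
  assert (Hall : forall j, (j < 2 * k)%nat ->
            dyadic_mass f (2 ^ j * (y / 2 ^ k)) <= 2 * 2 ^ k * dyadic_mass f y).
  { intros j Hj. apply Rnot_lt_le. intros Hlt. apply Hnone. exists j.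
    split; [exact Hj | lra]. }
  pose proof (variation_le_dyadic_blocks y _ Hy0 Hall) as HV.
  pose proof (dyadic_mass_le_cauchy N A eta y HA Hcau
                ltac:(apply INR_lt; simpl; lra) ltac:(nra)) as Hm.
  assert (Hm0 : 0 <= dyadic_mass f y)
    by (apply RInt_Rabs_ge0; [lra | apply Hex; lra]).
  assert (Hhalf : C * lam * (INR (2 * k) * (2 * 2 ^ k * dyadic_mass f y)) / INR N
                  <= dyadic_mass f y / 2).
  { apply Rmult_le_reg_r with (2 * INR N); [lra|].
    replace (C * lam * (INR (2 * k) * (2 * 2 ^ k * dyadic_mass f y)) / INR N * (2 * INR N))
      with (4 * C * lam * INR (2 * k) * 2 ^ k * dyadic_mass f y) by (field; lra).
    replace (dyadic_mass f y / 2 * (2 * INR N)) with (INR N * dyadic_mass f y)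
      by (field; lra).
    apply Rmult_le_compat_r; lra. }
  assert (y * variation f y (2 * y) / INR N
          <= C * lam * (INR (2 * k) * (2 * 2 ^ k * dyadic_mass f y)) / INR N)
    by (apply Rmult_le_compat_r; [apply Rlt_le, Rinv_0_lt_compat |]; lra).
  lra.
Qed.

Lemma dyadic_mass_vanishes :
  RInt_cauchy_at_infty f ->
  filterlim f (Rbar_locally p_infty) (locally 0) ->
  forall E, 0 < E -> exists Y, forall y, Y <= y -> dyadic_mass f y <= E.
Proof.
intros Hcau Hlim E HE.
destruct (INR_unbounded (4 * C * lam * INR (2 * k) * 2 ^ k)) as [N HN].
assert (HN0 : 0 < INR N).
{ assert (0 <= INR (2 * k)) by apply pos_INR.
  assert (0 < 2 ^ k) by (apply pow_lt; lra).
  assert (0 <= C * lam * INR (2 * k)) by (apply Rmult_le_pos; nra). nra. }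
destruct (Hcau (E / (2 * INR N)) ltac:(apply Rdiv_lt_0_compat; lra)) as [A0 [HA0 Hc]].
destruct (dyadic_mass_le_id Hlim) as [A1 [HA1 Hid]].
pose proof (Rmax_l A0 A1). pose proof (Rmax_r A0 A1).
apply (eventually_le_of_jumps (dyadic_mass f) (Rmax A0 A1) E (2 ^ k));
  [lra | exact HE | apply pow_R1_Rle; lra | intros; apply Hid; lra |].
intros y Hy Hmy.
apply (dyadic_mass_jump N (Rmax A0 A1) (E / (2 * INR N))); [lra | | exact HN | exact Hy |].
- intros u v Hu Hv. apply Hc; lra.
- replace (2 * (INR N * (E / (2 * INR N)))) with E by (field; lra). exact Hmy.
Qed.

Lemma mul_Rabs_vanishes :
  RInt_cauchy_at_infty f ->
  filterlim f (Rbar_locally p_infty) (locally 0) ->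
  forall eps, 0 < eps -> exists T, forall t, T < t -> t * Rabs (f t) < eps.
Proof.
intros Hcau Hlim eps Heps.
set (K := C * lam * INR (2 * k)).
assert (HK : 0 <= K) by (apply Rmult_le_pos; [nra | apply pos_INR]).
set (E := eps / (2 * (1 + K))).
assert (HE : 0 < E) by (apply Rdiv_lt_0_compat; lra).
destruct (dyadic_mass_vanishes Hcau Hlim E HE) as [Y HY].
destruct (Hcau E HE) as [A [HA Hc]].
assert (Hr : 1 <= 2 ^ k) by (apply pow_R1_Rle; lra).
pose proof (Rmax_l Y A). pose proof (Rmax_r Y A).
exists (2 ^ k * Rmax Y A). intros t Ht.
assert (Hz : Rmax Y A <= t / 2 ^ k)
  by (apply Rmult_le_reg_l with (2 ^ k); [lra|];
      replace (2 ^ k * (t / 2 ^ k)) with t by (field; lra); lra).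
assert (Hblocks : forall j, (j < 2 * k)%nat -> dyadic_mass f (2 ^ j * (t / 2 ^ k)) <= E).
{ intros j _. apply HY.
  assert (1 <= 2 ^ j) by (apply pow_R1_Rle; lra).
  apply Rle_trans with (t / 2 ^ k); [lra|].
  rewrite <- (Rmult_1_l (t / 2 ^ k)) at 1. apply Rmult_le_compat_r; lra. }
pose proof (Rabs_mul_le_dyadic_blocks t E ltac:(nra) Hblocks) as Hmain.
replace (C * lam * (INR (2 * k) * E)) with (K * E) in Hmain by (unfold K; ring).
pose proof (Hc t (2 * t) ltac:(nra) ltac:(nra)).
assert (E + K * E = eps / 2) by (unfold E; field; lra).
lra.
Qed.

End GeneralMonotone.
End LocallyIntegrableBV.

Theorem theorem1 (f : R -> R) :
  GM f ->
  (exists L : R, is_RInt_gen f (at_right 0) (Rbar_locally p_infty) L) ->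
  filterlim (fun t => t * f t) (Rbar_locally p_infty) (locally 0).
Proof.
intros [[_ [HBV Hlim]] [C [lam [HC [Hlam HGM]]]]] [L HL].
destruct (pow2_unbounded lam) as [k Hk].
intros P [eps HP].
destruct (mul_Rabs_vanishes f (ex_RInt_of_is_RInt_gen f L HL) HBV C lam
            ltac:(lra) ltac:(lra) HGM k ltac:(lra) (is_RInt_gen_cauchy f L HL) Hlim
            eps (cond_pos eps)) as [T HT].
exists (Rmax T 0). intros t Ht.
pose proof (Rmax_l T 0). pose proof (Rmax_r T 0).
apply HP. change (Rabs (t * f t - 0) < eps).
rewrite Rminus_0_r, Rabs_mult, (Rabs_pos_eq t) by lra.
apply HT. lra.
Qed.
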